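(* Let $\{G_N\}_{N\ge1}$ be a sequence of simple graphs, $G_N=(V_N,E_N)$ with $|V_N|=N$, and let $\varepsilon,T>0$. (i) There exist $\varepsilon'>0$ and $n_{\varepsilon'}(N)$ with $n_{\varepsilon'}(N)/N\to0$ as $N\to\infty$, such that if $\textsc{dis}_1(G_N,\varepsilon')/N\to0$ as $N\to\infty$, then $\mathbb P(\Delta^N(I(G_N,n_{\varepsilon'}),T)/N>\varepsilon)\to0$. (ii) There exist $\varepsilon'>0$ and $m_{\varepsilon'}(N)$ with $m_{\varepsilon'}(N)/\sqrt N\to0$ as $N\to\infty$, such that if $\textsc{dis}_2(G_N,\varepsilon')/\sqrt N\to0$ as $N\to\infty$, then $\mathbb P(\Delta^N(I(G_N,m_{\varepsilon'}),T)/\sqrt N>\varepsilon)\to0$.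
   Context: Load balancing on $G_N$: vertices are servers with queues (buffer $b$, possibly infinite); tasks arrive at each server as independent Poisson processes of rate $\lambda$ (in the diffusion setting the per-server rate may be $\lambda(N)/N\le 1$), processing times i.i.d. unit-mean exponential; a task arriving at $v$ goes to a shortest queue in $N[v]=\{v\}\cup\{\text{neighbors of }v\}$. $X_u(G_N,t)$ is the queue length at $u$; $\mathcal S(n)$ is a set of $n$ servers with shortest queues in $G_N$. The scheme $I(G_N,n)$ is coupled with the $G_N$ system: arrival epochs at each server synchronized; servers ordered by nondecreasing queue length and departures at the $k$-th ordered server synchronized. For a task arriving at $v$ at time $t$ assigned in $G_N$ to $v'\in N[v]$: if $\min_{u\in N[v]}X_u(G_N,t)\leq\max_{u\in\mathcal S(n)}X_u(G_N,t)$ (condition ( * )), choose a tie-breaking in which $v'\in\mathcal S(n)$, let $v'$ be $k$-th ordered, and assign the task under $I(G_N,n)$ to the $k$-th ordered server; otherwise assign it under $I(G_N,n)$ uniformly at random to one of the $n+1$ shortest servers. $\Delta^N(I(G_N,n),T)$ is the number of arrivals up to time $T$ for which ( * ) is violated. For $U\subseteq V$: $N[U]=U\cup\{v:\exists u\in U,(u,v)\in E\}$, $\textsc{com}(U)=|V\setminus N[U]|$; $\textsc{dis}_1(G,\varepsilon)=\sup_{|U|\ge\varepsilon|V|}\textsc{com}(U)$, $\textsc{dis}_2(G,\varepsilon)=\sup_{|U|\ge\varepsilon\sqrt{|V|}}\textsc{com}(U)$. *)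

From Stdlib Require Import Reals.
From Coquelicot Require Import Coquelicot.
From mathcomp Require Import ssreflect ssrbool ssrfun eqtype ssrnat seq
  choice fintype finfun finset bigop.

Set Implicit Arguments.
Unset Strict Implicit.
Unset Printing Implicit Defensive.
Local Open Scope nat_scope.

Definition Rleb (x y : R) : bool := if Rle_dec x y then true else false.

Definition simple_graph (N : nat) (G : rel 'I_N) : Prop :=
  symmetric G /\ irreflexive G.

Definition closed_nbhd (N : nat) (G : rel 'I_N) (v : 'I_N) : {set 'I_N} :=
  [set u | (u == v) || G v u].

Definition nbhd_set (N : nat) (G : rel 'I_N) (U : {set 'I_N}) : {set 'I_N} :=
  [set u | [exists w in U, (u == w) || G w u]].

Definition com (N : nat) (G : rel 'I_N) (U : {set 'I_N}) : nat :=
  #|~: nbhd_set G U|.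

(** dis_1(G, eps) = sup_{|U| >= eps |V|} com(U)  (sup over the empty family := 0). *)
Definition dis1 (N : nat) (G : rel 'I_N) (eps : R) : nat :=
  \max_(U : {set 'I_N} | Rleb (eps * INR N) (INR #|U|)) com G U.

Definition dis2 (N : nat) (G : rel 'I_N) (eps : R) : nat :=
  \max_(U : {set 'I_N} | Rleb (eps * sqrt (INR N)) (INR #|U|)) com G U.

(** Queue-length configurations. *)
Definition state (N : nat) := {ffun 'I_N -> nat}.

(** Buffer: [Some c] = finite buffer c, [None] = infinite buffer. *)
Definition has_room (b : option nat) (k : nat) : bool :=
  match b with Some c => k < c | None => true end.

Definition valid_state (N : nat) (b : option nat) (x : state N) : Prop :=
  match b with Some c => forall u, x u <= c | None => True end.

Definition minN (N : nat) (G : rel 'I_N) (x : state N) (v : 'I_N) : nat :=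
  \big[minn/x v]_(u in closed_nbhd G v) x u.

Definition shortest_set (N : nat) (x : state N) (n : nat) (S : {set 'I_N}) : bool :=
  (#|S| == n) && [forall u in S, forall w in ~: S, x u <= x w].

(** Condition [star] for an arrival at v in configuration x:
    min_{u in N[v]} X_u <= max_{u in S(n)} X_u  (S(n) any set of n shortest queues;
    the maximum does not depend on the choice). *)
Definition cond_star (N : nat) (G : rel 'I_N) (n : nat) (x : state N) (v : 'I_N) : bool :=
  [exists S, shortest_set x n S && (minN G x v <= \max_(u in S) x u)].

Definition inc (N : nat) (x : state N) (u : 'I_N) : state N :=
  [ffun w => if w == u then (x w).+1 else x w].
Definition dec (N : nat) (x : state N) (u : 'I_N) : state N :=
  [ffun w => if w == u then (x w).-1 else x w].

Definition sumI (N : nat) (f : 'I_N -> R) : R :=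
  foldr Rplus 0%R (map f (enum 'I_N)).
Definition sumA (N : nat) (A : {set 'I_N}) (f : 'I_N -> R) : R :=
  foldr Rplus 0%R (map f (enum A)).

(** Uniformized jump chain of the JSQ-on-G_N system (per-server arrival rate lam,
    unit-rate exponential services, ties among shortest queues in N[v] broken
    uniformly at random, tasks blocked when the chosen queue is full).
    Events occur at total rate L = N (lam + 1): an arrival at v with probability
    lam / L, a (potential) service completion at u with probability 1 / L.
    [pviol ... k x c thr] = probability that, starting from configuration x with
    c violations of [star] already counted, after k further events the total number
    of arrivals violating [star] exceeds thr. *)
Fixpoint pviol (N : nat) (G : rel 'I_N) (lam : R) (b : option nat) (n : nat)
  (thr : R) (k : nat) (x : state N) (c : nat) {struct k} : R :=
  match k with
  | 0 => if Rlt_dec thr (INR c) then 1%R else 0%R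
  | k'.+1 =>
    let L := (INR N * (lam + 1))%R in
    (sumI (fun v =>
        let m := minN G x v in
        let c' := (c + ~~ cond_star G n x v)%N in
        let A := [set u in closed_nbhd G v | x u == m] in
        (lam / L *
          (if has_room b m
           then sumA A (fun u => / INR #|A| * pviol G lam b n thr k' (inc x u) c')
           else pviol G lam b n thr k' x c'))%R)
     + sumI (fun u => (/ L * pviol G lam b n thr k' (dec x u) c)%R))%R
  end.

(** P( Delta^N(I(G_N,n), T) > thr ) with G_N started from x0: the number of events
    up to time T is Poisson(L T), independent of the jump chain. *)
Definition prob_exceed (N : nat) (G : rel 'I_N) (lam : R) (b : option nat) (n : nat)
  (x0 : state N) (T thr : R) : R :=
  let L := (INR N * (lam + 1))%R in
  Series (fun k => (exp (- (L * T)) * (L * T) ^ k / INR (k`!)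
                    * pviol G lam b n thr k x0 0)%R).

From Stdlib Require Import Reals Lra Lia Classical IndefiniteDescription.
From Coquelicot Require Import Coquelicot.
From mathcomp Require Import ssreflect ssrbool ssrfun eqtype ssrnat seq
  choice div fintype finfun finset bigop.
From mathcomp Require Import zify.

(* If S is a set of n shortest queues, condition (star) can fail for an arrival at v only
   when v lies outside N[S], so at every instant at most com(S) <= dis servers are bad.
   Each event of the uniformized chain is an arrival at a bad server with probability at
   most lam dis / (N (lam + 1)), and the number of events up to time T is
   Poisson(N (lam + 1) T); so the expected number of violations is at most lam T dis, and
   Markov's inequality bounds P(Delta > eps s_N) by lam T dis / (eps s_N), where s_N is
   N or sqrt N.  It remains to take n = o(s_N) with dis(G_N, n / s_N) = o(s_N): if
   dis(G_N, eps') = o(s_N) for every eps' > 0, a diagonal argument provides eps'_N -> 0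
   that works; otherwise some eps' falsifies the hypothesis of the claim. *)

Set Implicit Arguments.
Unset Strict Implicit.
Unset Printing Implicit Defensive.

Local Open Scope R_scope.

Definition lsum {T : Type} (s : seq T) (f : T -> R) : R := foldr Rplus 0 (map f s).

Section ListSums.
Variable T : Type.
Implicit Types (s : seq T) (f g : T -> R).

Lemma eq_lsum s f g : (forall x, f x = g x) -> lsum s f = lsum s g.
Proof. by move=> fg; rewrite /lsum; elim: s => [|x s IH] //=; rewrite fg IH. Qed.

Lemma lsum_le s f g : (forall x, f x <= g x) -> lsum s f <= lsum s g.
Proof. by rewrite /lsum => fg; elim: s => [|x s IH] /=; [lra | have := fg x; lra]. Qed.

Lemma lsumD s f g : lsum s (fun x => f x + g x) = lsum s f + lsum s g.
Proof. by rewrite /lsum; elim: s => [|x s IH] /=; [lra | rewrite IH; lra]. Qed.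

Lemma lsumZ s a f : lsum s (fun x => a * f x) = a * lsum s f.
Proof. by rewrite /lsum; elim: s => [|x s IH] /=; [lra | rewrite IH; lra]. Qed.

Lemma lsum_const s a : lsum s (fun _ => a) = INR (size s) * a.
Proof.
elim: s => [|x s IH]; first by rewrite /lsum /=; lra.
have -> : lsum (x :: s) (fun _ => a) = a + lsum s (fun _ => a) by [].
by rewrite IH (_ : size (x :: s) = (size s).+1) // S_INR; lra.
Qed.

Lemma lsum_ge0 s f : (forall x, 0 <= f x) -> 0 <= lsum s f.
Proof. by move=> f_ge0; have := lsum_le s f_ge0; rewrite lsum_const; lra. Qed.

Lemma lsum_count s (p : pred T) : lsum s (fun x => INR (p x)) = INR (count p s).
Proof. by rewrite /lsum; elim: s => [|x s IH] //=; rewrite IH plus_INR. Qed.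

Lemma lsum_mean_le s f B :
  0 <= B -> (forall x, f x <= B) -> lsum s (fun x => / INR (size s) * f x) <= B.
Proof.
move=> B_ge0 f_le; rewrite lsumZ.
case: (posnP (size s)) => [/size0nil -> | s_gt0]; first by rewrite /lsum /= Rmult_0_r.
have size_gt0 : 0 < INR (size s) by apply: lt_0_INR; apply/ltP.
have := lsum_le s f_le; rewrite lsum_const => sum_le.
apply: (Rmult_le_reg_l (INR (size s))) => //.
by rewrite -Rmult_assoc Rinv_r; lra.
Qed.

Lemma lsum_mean_ge0 s f :
  (forall x, 0 <= f x) -> 0 <= lsum s (fun x => / INR (size s) * f x).
Proof.
move=> f_ge0; rewrite lsumZ.
case: (posnP (size s)) => [/size0nil -> | s_gt0]; first by rewrite /lsum /= Rmult_0_r; lra.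
apply: Rmult_le_pos; last exact: lsum_ge0.
by apply: Rlt_le; apply: Rinv_0_lt_compat; apply: lt_0_INR; apply/ltP.
Qed.

End ListSums.

(* [dis1 G eps] and [dis2 G eps] unfold to [dis_ge G (eps * INR N)] and
   [dis_ge G (eps * sqrt (INR N))]. *)
Definition dis_ge (N : nat) (G : rel 'I_N) (r : R) : nat :=
  \max_(U : {set 'I_N} | Rleb r (INR #|U|)) com G U.

Lemma com_le_dis_ge N (G : rel 'I_N) r (U : {set 'I_N}) :
  r <= INR #|U| -> (com G U <= dis_ge G r)%N.
Proof.
move=> r_le; rewrite /dis_ge; apply: (leq_bigmax_cond (P := fun U => Rleb _ _)).
by rewrite /Rleb; case: Rle_dec.
Qed.

Lemma count_enum_card (T : finType) (p : pred T) : count p (enum T) = #|p|.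
Proof. by rewrite enumT cardE /enum_mem size_filter. Qed.

Lemma minN_le N (G : rel 'I_N) (x : state N) v w :
  w \in closed_nbhd G v -> (minN G x v <= x w)%N.
Proof.
move=> w_nbhd; rewrite /minN.
elim: (index_enum _) (mem_index_enum w) => [|u s IH] //; rewrite inE big_cons.
case/orP=> [/eqP <- | w_s]; first by rewrite w_nbhd geq_minl.
by case: ifP => _; [apply: leq_trans (geq_minr _ _) (IH w_s) | apply: IH].
Qed.

Lemma shortest_set_exists N (x : state N) n :
  (n <= N)%N -> exists S, shortest_set x n S.
Proof.
elim: n => [|n IH] n_le.
  exists set0; rewrite /shortest_set cards0 eqxx.
  by apply/forallP => u; rewrite inE.
have [S /andP [/eqP cardS /forallP S_short]] := IH (ltnW n_le).
have : (0 < #|~: S|)%N by rewrite cardsCs setCK card_ord cardS; lia.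
case/card_gt0P => w0 w0_out.
case: (arg_minnP x w0_out) => w w_out w_min.
have wS : w \notin S by rewrite -in_setC.
exists (w |: S); apply/andP; split; first by rewrite cardsU1 wS cardS.
apply/forall_inP => u u_in; apply/forall_inP => z.
rewrite !inE negb_or => /andP [z_ne_w zS].
have zC : z \in ~: S by rewrite in_setC.
case/setU1P: u_in => [-> | uS]; first exact: w_min.
by move: (S_short u); rewrite uS => /forall_inP; apply.
Qed.

Lemma violations_le_com N (G : rel 'I_N) n (x : state N) S :
  symmetric G -> shortest_set x n S ->
  (count (fun v => ~~ cond_star G n x v) (enum 'I_N) <= com G S)%N.
Proof.
move=> G_sym S_short; rewrite /com -count_enum_card.
apply: sub_count => v /= v_viol; change (v \in ~: nbhd_set G S).
rewrite in_setC inE; apply: contra v_viol => /existsP [w /andP [wS vw]].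
apply/existsP; exists S; rewrite S_short /=.
apply: leq_trans (leq_bigmax_cond _ wS); apply: minN_le.
by rewrite inE eq_sym G_sym.
Qed.

Lemma violations_le_dis_ge N (G : rel 'I_N) n (x : state N) r :
  symmetric G -> (n <= N)%N -> r <= INR n ->
  (count (fun v => ~~ cond_star G n x v) (enum 'I_N) <= dis_ge G r)%N.
Proof.
move=> G_sym n_le r_le; have [S S_short] := shortest_set_exists x n_le.
apply: leq_trans (violations_le_com G_sym S_short) (com_le_dis_ge _ _).
by case/andP: S_short => /eqP ->.
Qed.

Lemma factorial_fact k : k`! = Factorial.fact k.
Proof. by elim: k => [|k IH] //; rewrite factS IH /= -multE. Qed.

Lemma poisson_mean mu :
  is_series (fun k => exp (- mu) * mu ^ k / INR k`! * INR k) mu.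
Proof.
have shifted_term k : mu * exp (- mu) * (mu ^ k * / INR (Factorial.fact k))
    = exp (- mu) * mu ^ k.+1 / INR k.+1`! * INR k.+1.
  rewrite factS mult_INR factorial_fact -tech_pow_Rmult S_INR.
  by move: (pos_INR k) (INR_fact_neq_0 k) => k_ge0 fact_neq0; field; lra.
apply: is_series_decr_1; rewrite /opp /plus /= Rmult_0_r Ropp_0 Rplus_0_r.
have := is_series_scal_l (mu * exp (- mu)) _ _ (is_exp_Reals mu).
rewrite /scal /= /mult /= Rmult_assoc -exp_plus Rplus_opp_l exp_0 Rmult_1_r.
by apply: is_series_ext => k; rewrite pow_n_pow; apply: shifted_term.
Qed.

Lemma Series_ge0 (a : nat -> R) : (forall k, 0 <= a k) -> ex_series a -> 0 <= Series a.
Proof.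
move=> a_ge0 a_ex; have := Series_le (fun k => 0 * a k) a _ a_ex.
by rewrite Series_scal_l Rmult_0_l; apply => k; have := a_ge0 k; lra.
Qed.

Section ViolationMarkovBound.
Variables (N : nat) (G : rel 'I_N) (lam : R) (b : option nat) (n : nat) (thr : R).
Hypotheses (N_gt0 : (0 < N)%N) (lam_gt0 : 0 < lam) (thr_gt0 : 0 < thr).

Let L := INR N * (lam + 1).

Let INR_N_gt0 : 0 < INR N.
Proof. by apply: lt_0_INR; apply/ltP. Qed.

Let L_gt0 : 0 < L.
Proof. by rewrite /L; nra. Qed.

Let rate_ge0 : 0 <= lam / L.
Proof. by apply: Rdiv_le_0_compat; lra. Qed.

Lemma pviol_ge0 k x c : 0 <= pviol G lam b n thr k x c.
Proof.
elim: k x c => [|k IH] x c /=; first by case: Rlt_dec => _ /=; lra.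
rewrite -/L; apply: Rplus_le_le_0_compat; apply: lsum_ge0 => v.
- apply: Rmult_le_pos => //.
  by case: has_room => //; rewrite cardE; apply: lsum_mean_ge0.
- by apply: Rmult_le_pos => //; apply: Rlt_le; apply: Rinv_0_lt_compat.
Qed.

Lemma pviol_succ_le k (h : nat -> R) :
  (forall y c, pviol G lam b n thr k y c <= h c) ->
  forall x c, pviol G lam b n thr k.+1 x c <=
    lsum (enum 'I_N) (fun v => lam / L * h (c + ~~ cond_star G n x v)%N)
    + INR N / L * h c.
Proof.
move=> pviol_le_h x c.
have h_ge0 c' : 0 <= h c' by apply: Rle_trans (pviol_le_h x c'); apply: pviol_ge0.
rewrite /= -/L; apply: Rplus_le_compat.
  apply: lsum_le => v; apply: Rmult_le_compat_l => //.
  by case: has_room => //; rewrite cardE; apply: lsum_mean_le.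
have inv_L_ge0 : 0 <= / L by apply: Rlt_le; apply: Rinv_0_lt_compat.
apply: Rle_trans (lsum_le _ (fun u => Rmult_le_compat_l _ _ _ inv_L_ge0 (pviol_le_h _ c))) _.
by rewrite lsum_const size_enum_ord; right; rewrite /Rdiv; ring.
Qed.

Variable D : nat.
Hypothesis violations_le :
  forall x : state N, (count (fun v => ~~ cond_star G n x v) (enum 'I_N) <= D)%N.

(* Markov's inequality, carried along the recursion defining [pviol]: each event adds at
   most [lam * D / L] violations in expectation. *)
Lemma pviol_le k x c :
  pviol G lam b n thr k x c <= (INR c + INR k * (lam * INR D / L)) / thr.
Proof.
elim: k x c => [|k IH] x c.
  rewrite /= Rmult_0_l Rplus_0_r; case: Rlt_dec => [c_gt | _] /=.
    by apply/Rle_div_r => //; lra.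
  by apply: Rdiv_le_0_compat => //; apply: pos_INR.
apply: Rle_trans (pviol_succ_le IH x c) _.
set B := (INR c + INR k * (lam * INR D / L)) / thr.
set cnt := count (fun v => ~~ cond_star G n x v) (enum 'I_N).
have -> : lsum (enum 'I_N) (fun v =>
      lam / L * ((INR (c + ~~ cond_star G n x v) + INR k * (lam * INR D / L)) / thr))
    = lsum (enum 'I_N) (fun v =>
      lam / L * B + lam / (L * thr) * INR (~~ cond_star G n x v)).
  by apply: eq_lsum => v; rewrite plus_INR /B; field; lra.
rewrite lsumD lsum_const lsumZ lsum_count size_enum_ord -/cnt.
have cnt_le : INR cnt <= INR D by apply: le_INR; apply/leP; apply: violations_le.
have rate_thr_ge0 : 0 <= lam / (L * thr) by apply: Rdiv_le_0_compat; nra.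
have -> : (INR c + INR k.+1 * (lam * INR D / L)) / thr = B + lam / (L * thr) * INR D.
  by rewrite S_INR /B; field; lra.
have -> : INR N * (lam / L * B) + lam / (L * thr) * INR cnt + INR N / L * B
    = B + lam / (L * thr) * INR cnt by rewrite /L; field; lra.
by apply: Rplus_le_compat_l; apply: Rmult_le_compat_l.
Qed.

Lemma prob_exceed_le (x0 : state N) T :
  0 < T -> 0 <= prob_exceed G lam b n x0 T thr <= lam * T * INR D / thr.
Proof.
move=> T_gt0; rewrite /prob_exceed -/L.
set w := fun k => exp (- (L * T)) * (L * T) ^ k / INR k`!.
set a := lam * INR D / L.
have w_ge0 k : 0 <= w k.
  apply: Rmult_le_pos; last by rewrite factorial_fact; apply/Rlt_le/Rinv_0_lt_compat/INR_fact_lt_0.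
  by apply: Rmult_le_pos; [apply: Rlt_le; apply: exp_pos | apply: pow_le; nra].
have term_le k : 0 <= w k * pviol G lam b n thr k x0 0 <= a / thr * (w k * INR k).
  split; first by apply: Rmult_le_pos => //; apply: pviol_ge0.
  apply: Rle_trans (Rmult_le_compat_l _ _ _ (w_ge0 k) (pviol_le k x0 0)) _.
  by rewrite /= Rplus_0_l -/a; right; field; lra.
have bound_sum : is_series (fun k => a / thr * (w k * INR k)) (a / thr * (L * T)).
  exact: is_series_scal (a / thr) _ _ (poisson_mean (mu := L * T)).
have terms_ex : ex_series (fun k => w k * pviol G lam b n thr k x0 0).
  apply: ex_series_le (ex_intro _ _ bound_sum) => k.
  by rewrite /norm /= /abs /= Rabs_pos_eq; case: (term_le k).
change (0 <= Series (fun k => w k * pviol G lam b n thr k x0 0) <= lam * T * INR D / thr).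
split; first by apply: Series_ge0 => // k; case: (term_le k).
apply: Rle_trans (Series_le _ _ term_le (ex_intro _ _ bound_sum)) _.
by rewrite (is_series_unique _ _ bound_sum) /a; right; field; lra.
Qed.

End ViolationMarkovBound.

Lemma is_lim_seq_inv_succ : is_lim_seq (fun k => / INR k.+1) 0.
Proof.
apply: (is_lim_seq_inv _ p_infty) => //.
exact/(is_lim_seq_incr_1 INR)/is_lim_seq_INR.
Qed.

Lemma eventually_gt0 : eventually (fun N => (0 < N)%N).
Proof. by exists 1%N => N /leP. Qed.

Section Diagonal.
Variable f : nat -> nat -> R.
Hypothesis f_lim : forall k, is_lim_seq (f k) 0.

Lemma row_threshold k :
  exists M, forall N, (M <= N)%N -> Rabs (f k N) < / INR k.+1.
Proof.
have inv_gt0 : 0 < / INR k.+1 by apply: Rinv_0_lt_compat; apply: lt_0_INR; lia.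
have [M M_spec] := proj2 (is_lim_seq_spec _ _) (f_lim k) (mkposreal _ inv_gt0).
by exists M => N /leP /M_spec; rewrite Rminus_0_r.
Qed.

Definition threshold k : nat :=
  proj1_sig (constructive_indefinite_description _ (row_threshold k)).

Lemma thresholdP k N : (threshold k <= N)%N -> Rabs (f k N) < / INR k.+1.
Proof. by rewrite /threshold; case: constructive_indefinite_description => M /=; apply. Qed.

Fixpoint diag (N : nat) : nat :=
  if N is N'.+1 then
    if (threshold (diag N').+1 <= N)%N then (diag N').+1 else diag N'
  else 0.

Lemma diag_spec N : diag N = 0%N \/ (threshold (diag N) <= N)%N.
Proof.
elim: N => [|N IH] /=; first by left.
by case: ifP => [-> | _]; [right | case: IH => [-> | le]; [left | right; lia]].
Qed.

Lemma diag_mono : {homo diag : N N' / (N <= N')%N}.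
Proof.
move=> N N'; elim: N' => [|N' IH]; first by rewrite leqn0 => /eqP ->.
rewrite leq_eqVlt => /orP [/eqP -> // | /IH le] /=; case: ifP => _; lia.
Qed.

Lemma diag_unbounded : filterlim diag eventually eventually.
Proof.
suff diag_ge j : exists N0, forall N, (N0 <= N)%N -> (j <= diag N)%N.
  move=> P [j P_ge]; have [N0 N0_spec] := diag_ge j.
  by exists N0 => N /leP /N0_spec /leP /P_ge.
elim: j => [|j [N0 IH]]; first by exists 0%N.
set N1 := maxn N0 (threshold j.+1).
exists N1.+1 => N N_ge; apply: leq_trans (diag_mono N_ge).
have := IH N1 (leq_maxl _ _); rewrite /=; case: ifP => [_ | ]; first lia.
have := leq_maxr N0 (threshold j.+1); rewrite -/N1.
case: (ltngtP j (diag N1)) => // <-; lia.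
Qed.

Lemma diagonal_lim :
  exists K : nat -> nat, filterlim K eventually eventually /\ is_lim_seq (fun N => f (K N) N) 0.
Proof.
exists diag; split; first exact: diag_unbounded.
have inv_lim : is_lim_seq (fun N => / INR (diag N).+1) 0 :=
  filterlim_comp _ _ _ _ _ _ _ _ diag_unbounded is_lim_seq_inv_succ.
apply/is_lim_seq_abs_0; apply: is_lim_seq_le_le_loc inv_lim.
- have diag_gt0 : eventually (fun N => (0 < diag N)%N) := diag_unbounded eventually_gt0.
  apply: filter_imp diag_gt0 => N diag_gt0; split; first exact: Rabs_pos.
  by case: (diag_spec N) => [diag0 | /thresholdP /Rlt_le //]; rewrite diag0 in diag_gt0.
- exact: is_lim_seq_const.
Qed.

End Diagonal.

Section Scaling.
Variables (G : forall N : nat, rel 'I_N) (s : nat -> R) (q : nat -> nat).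
Arguments G : clear implicits.

Hypothesis G_sym : forall N : nat, symmetric (G N).
Hypothesis s_lim : is_lim_seq s p_infty.
Hypothesis q_floor :
  forall N, (0 < N)%N -> (0 < q N <= N)%N /\ INR (q N) <= s N < INR (q N) + 1.

Definition dis_ratio (d : R) (N : nat) : R := INR (dis_ge (G N) (d * s N)) / s N.

(* An integer between [s N / k.+1] and [s N / k.+1 + 1]. *)
Definition reduced_size (k N : nat) : nat := (q N %/ k.+1 + 1)%N.

Lemma s_gt0 N : (0 < N)%N -> 0 < s N.
Proof.
move=> N_gt0; have [/andP [q_gt0 _] [q_le _]] := q_floor N_gt0.
by apply: Rlt_le_trans q_le; apply: lt_0_INR; apply/ltP.
Qed.

Lemma reduced_size_le k N : (0 < k)%N -> (0 < N)%N -> (reduced_size k N <= N)%N.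
Proof.
move=> k_gt0 N_gt0; have [/andP [q_gt0 q_le] _] := q_floor N_gt0.
have := leq_div2l (q N) (isT : (0 < 2)%N) (k_gt0 : (2 <= k.+1)%N).
have := leq_divM (q N) 2; rewrite /reduced_size; lia.
Qed.

Lemma reduced_size_ge k N : (0 < N)%N -> / INR k.+1 * s N <= INR (reduced_size k N).
Proof.
move=> N_gt0; have [_ [_ s_lt]] := q_floor N_gt0.
have k_gt0 : 0 < INR k.+1 by apply: lt_0_INR; lia.
have ceil_ge : INR (q N).+1 <= INR (reduced_size k N) * INR k.+1.
  rewrite -mult_INR; apply: le_INR; apply/leP; rewrite /reduced_size addn1 multE.
  exact: ltn_ceil.
apply: (Rmult_le_reg_l (INR k.+1)) => //; rewrite -Rmult_assoc Rinv_r; last lra.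
by rewrite S_INR in ceil_ge; lra.
Qed.

Lemma reduced_size_ratio_le k N :
  (0 < N)%N -> INR (reduced_size k N) / s N <= / INR k.+1 + / s N.
Proof.
move=> N_gt0; have [_ [q_le _]] := q_floor N_gt0; have s_pos := s_gt0 N_gt0.
have k_gt0 : 0 < INR k.+1 by apply: lt_0_INR; lia.
have floor_le : INR (q N %/ k.+1) * INR k.+1 <= s N.
  by rewrite -mult_INR; apply: Rle_trans q_le; apply: le_INR; apply/leP; apply: leq_divM.
rewrite /reduced_size plus_INR /Rdiv Rmult_plus_distr_r [INR 1]/= Rmult_1_l.
apply: Rplus_le_compat_r; apply/Rle_div_l => //.
by rewrite Rmult_comm; apply/Rle_div_r.
Qed.

Lemma reduced_size_lim (K : nat -> nat) :
  filterlim K eventually eventually ->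
  is_lim_seq (fun N => INR (reduced_size (K N) N) / s N) 0.
Proof.
move=> K_lim.
have inv_K : is_lim_seq (fun N => / INR (K N).+1) 0 :=
  filterlim_comp _ _ _ _ _ _ _ _ K_lim is_lim_seq_inv_succ.
have inv_s : is_lim_seq (fun N => / s N) 0 by apply: (is_lim_seq_inv _ p_infty).
have bound_lim : is_lim_seq (fun N => / INR (K N).+1 + / s N) 0.
  by have := is_lim_seq_plus' _ _ _ _ inv_K inv_s; rewrite Rplus_0_r.
apply: is_lim_seq_le_le_loc (is_lim_seq_const 0) bound_lim.
apply: filter_imp eventually_gt0 => N N_gt0; split; last exact: reduced_size_ratio_le.
by apply: Rdiv_le_0_compat; [apply: pos_INR | apply: s_gt0].
Qed.

Lemma prob_exceed_reduced_le k N lam lam_max b (x0 : state N) eps T :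
  (0 < k)%N -> (0 < N)%N -> 0 < lam <= lam_max -> 0 < eps -> 0 < T ->
  0 <= prob_exceed (G N) lam b (reduced_size k N) x0 T (eps * s N)
    <= lam_max * T / eps * dis_ratio (/ INR k.+1) N.
Proof.
move=> k_gt0 N_gt0 [lam_gt0 lam_le] eps_gt0 T_gt0; have s_pos := s_gt0 N_gt0.
have violations_le x := violations_le_dis_ge x (@G_sym N)
  (reduced_size_le k_gt0 N_gt0) (reduced_size_ge k N_gt0).
have [prob_ge0 prob_le] := prob_exceed_le b N_gt0 lam_gt0 (Rmult_lt_0_compat _ _ eps_gt0 s_pos)
  violations_le x0 T_gt0.
split => //; apply: Rle_trans prob_le _; rewrite /dis_ratio.
set D := INR (dis_ge _ _).
have ratio_ge0 : 0 <= T / eps * (D / s N).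
  by apply: Rmult_le_pos; apply: Rdiv_le_0_compat; rewrite /D; try apply: pos_INR; lra.
have -> : lam * T * D / (eps * s N) = lam * (T / eps * (D / s N)) by field; lra.
have -> : lam_max * T / eps * (D / s N) = lam_max * (T / eps * (D / s N)) by field; lra.
exact: Rmult_le_compat_r.
Qed.

(* If [dis_ratio d] vanishes for every [d > 0], it still vanishes along a diagonal sequence
   [d_N = / INR (K N).+1 -> 0]; otherwise some [d] falsifies the hypothesis of the implication. *)
Lemma violations_vanish (lam : nat -> R) lam_max (b : option nat) (x0 : forall N, state N) eps T :
  (forall N, 0 < lam N <= lam_max) -> 0 < eps -> 0 < T ->
  exists (eps' : R) (m : nat -> nat),
    (0 < eps') /\ is_lim_seq (fun N => INR (m N) / s N) 0 /\
    (is_lim_seq (dis_ratio eps') 0 ->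
     is_lim_seq (fun N => prob_exceed (G N) (lam N) b (m N) (x0 N) T (eps * s N)) 0).
Proof.
move=> lam_bnd eps_gt0 T_gt0.
case: (classic (forall d, 0 < d -> is_lim_seq (dis_ratio d) 0)); last first.
  case/not_all_ex_not => d not_imp; have [d_gt0 not_vanish] := imply_to_and _ _ not_imp.
  exists d, (fun _ => 0%N); split => //; split => [|/not_vanish []].
  by apply: is_lim_seq_ext (is_lim_seq_const 0) => N; rewrite /= /Rdiv Rmult_0_l.
move=> all_vanish.
have inv_succ_gt0 k : 0 < / INR k.+1 by apply: Rinv_0_lt_compat; apply: lt_0_INR; lia.
have [K [K_lim ratio_lim]] :=
  diagonal_lim (f := fun k => dis_ratio (/ INR k.+1)) (fun k => all_vanish _ (inv_succ_gt0 k)).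
exists 1, (fun N => reduced_size (K N) N); split; first lra.
split => [|_]; first exact: reduced_size_lim.
have bound_lim := is_lim_seq_scal_l _ (lam_max * T / eps) _ ratio_lim.
rewrite /= Rmult_0_r in bound_lim.
apply: is_lim_seq_le_le_loc (is_lim_seq_const 0) bound_lim.
have K_gt0 : eventually (fun N => (0 < K N)%N) := K_lim _ eventually_gt0.
apply: filter_imp (filter_and _ _ K_gt0 eventually_gt0) => N [k_gt0 N_gt0].
exact: prob_exceed_reduced_le.
Qed.

End Scaling.

Lemma is_lim_seq_sqrt_INR : is_lim_seq (fun N => sqrt (INR N)) p_infty.
Proof. exact: filterlim_comp _ _ _ _ _ _ _ _ is_lim_seq_INR filterlim_sqrt_p. Qed.

Lemma Nat_sqrt_floor N :
  (0 < N)%N ->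
  (0 < Nat.sqrt N <= N)%N /\ INR (Nat.sqrt N) <= sqrt (INR N) < INR (Nat.sqrt N) + 1.
Proof.
move=> N_gt0; have [/leP sq_le /leP lt_sq] := Nat.sqrt_spec N (Nat.le_0_l N).
have /leP sqrt_le := Nat.sqrt_le_lin N.
set r := Nat.sqrt N in sq_le lt_sq sqrt_le *.
have r_ge0 := pos_INR r.
split; first by clearbody r; nia.
split.
  rewrite -(sqrt_square (INR r)) //; apply: sqrt_le_1_alt.
  by rewrite -mult_INR; apply: le_INR; apply/leP.
rewrite -(sqrt_square (INR r + 1)); last lra.
apply: sqrt_lt_1_alt; split; first exact: pos_INR.
by rewrite -S_INR -mult_INR; apply: lt_INR; apply/leP.
Qed.

Theorem proposition3p5 :
  forall (G : forall N : nat, rel 'I_N),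
  (forall N, simple_graph (G N)) ->
  forall (b : option nat),
  (forall c, b = Some c -> (1 <= c)%N) ->
  forall (eps T : R), (0 < eps)%R -> (0 < T)%R ->
  (* (i) fluid scale, fixed per-server arrival rate lam *)
  (forall (lam : R) (x0 : forall N : nat, state N),
     (0 < lam)%R -> (forall N, valid_state b (x0 N)) ->
     exists (eps' : R) (n : nat -> nat),
       (0 < eps')%R /\
       is_lim_seq (fun N => (INR (n N) / INR N)%R) 0%R /\
       (is_lim_seq (fun N => (INR (dis1 (G N) eps') / INR N)%R) 0%R ->
        is_lim_seq (fun N => prob_exceed (G N) lam b (n N) (x0 N) T (eps * INR N)%R) 0%R))
  /\
  (* (ii) diffusion scale, per-server arrival rate lam N = lambda(N)/N <= 1 *)
  (forall (lam : nat -> R) (x0 : forall N : nat, state N),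
     (forall N, 0 < lam N <= 1)%R -> (forall N, valid_state b (x0 N)) ->
     exists (eps' : R) (m : nat -> nat),
       (0 < eps')%R /\
       is_lim_seq (fun N => (INR (m N) / sqrt (INR N))%R) 0%R /\
       (is_lim_seq (fun N => (INR (dis2 (G N) eps') / sqrt (INR N))%R) 0%R ->
        is_lim_seq (fun N => prob_exceed (G N) (lam N) b (m N) (x0 N) T
                               (eps * sqrt (INR N))%R) 0%R)).
Proof.
move=> G G_simple b _ eps T eps_gt0 T_gt0.
have G_sym N : symmetric (G N) by case: (G_simple N).
split=> [lam x0 lam_gt0 _ | lam x0 lam_bnd _].
- have id_floor N : (0 < N)%N -> (0 < id N <= N)%N /\ INR (id N) <= INR N < INR (id N) + 1.
    by move=> N_gt0; rewrite /= N_gt0 leqnn; split => //; lra.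
  have lam_const (N : nat) : 0 < (fun _ => lam) N <= lam by split => //; lra.
  exact: (violations_vanish G_sym is_lim_seq_INR id_floor b x0 lam_const eps_gt0 T_gt0).
- exact: (violations_vanish G_sym is_lim_seq_sqrt_INR Nat_sqrt_floor b x0 lam_bnd eps_gt0 T_gt0).
Qed.
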